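(* Let $X$ be a compact metric space and $f\colon X\to X$ a homeomorphism. Then the set $\mathcal{M}_{idis}(f)$ of Borel probability measures on $X$ that are inner-distal with respect to $f$ is a closed, convex subset of $\mathcal{M}(X)$ satisfying $f_*(\mathcal{M}_{idis}(f))\subseteq\mathcal{M}_{idis}(f)$.
   Context: $\mathcal{M}(X)$ is the set of Borel probability measures on $X$ with the weak* topology ($\mu_n\to\mu$ iff $\int\varphi\,d\mu_n\to\int\varphi\,d\mu$ for all continuous $\varphi\colon X\to\mathbb{R}$). $f_*\mu(E)=\mu(f^{-1}(E))$. The proximal cell of $x$ is $\mathcal{P}(x)=\{y\colon \inf_{n\in\mathbb{Z}} d(f^n(x),f^n(y))=0\}$, and $\mu$ is inner-distal w.r.t. $f$ if $\mu(\operatorname{Int}\mathcal{P}(x))=0$ for all $x\in X$. *)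

From HB Require Import structures.
From mathcomp Require Import all_boot all_order all_algebra.
From mathcomp Require Import all_classical all_reals all_analysis.
Set Implicit Arguments. Unset Strict Implicit. Unset Printing Implicit Defensive.
Import Order.TTheory GRing.Theory Num.Theory.
Import numFieldNormedType.Exports.
Local Open Scope classical_set_scope.
Local Open Scope ring_scope.

Notation borelT X := (g_sigma_algebraType (@open X)).

(* pointed metric spaces (measurable types in mathcomp-analysis are pointed) *)
#[short(type="pmetricType")]
HB.structure Definition PMetric (K : numDomainType) :=
  { M of Pointed M & Metric K M }.

Section Defs.
Context {R : realType} (X : pmetricType R).

(* integer iterates f^n of a homeomorphism f with inverse g *)
Definition iterz (f g : X -> X) (n : int) : X -> X :=
  match n with
  | Posz k => iter k f
  | Negz k => iter k.+1 g
  end.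

Definition proximal_cell (f g : X -> X) (x : X) : set X :=
  [set y | inf [set mdist (iterz f g n x) (iterz f g n y) | n in [set: int]] = 0].

Definition inner_distal (f g : X -> X) (mu : probability (borelT X) R) : Prop :=
  forall x : X, mu (interior (proximal_cell f g x)) = 0%E.

Definition M_idis (f g : X -> X) : set (probability (borelT X) R) :=
  [set mu | inner_distal f g mu].

Definition pint (mu : probability (borelT X) R) (phi : X -> R) : R :=
  fine (\int[mu]_x (phi x)%:E).

(* closedness in the weak-* topology on M(X): every measure all of whose
   basic weak-* neighbourhoods { nu : |\int phi_i dnu - \int phi_i dmu| < e,
   i < n } meet S belongs to S *)
Definition weak_star_closed (S : set (probability (borelT X) R)) : Prop :=
  forall mu : probability (borelT X) R,
    (forall (n : nat) (phi : 'I_n -> X -> R) (e : R),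
        (forall i, continuous (phi i)) -> 0 < e ->
        exists nu, S nu /\ forall i, `|pint nu (phi i) - pint mu (phi i)| < e) ->
    S mu.

Definition measure_convex (S : set (probability (borelT X) R)) : Prop :=
  forall (mu nu lam : probability (borelT X) R) (t : R),
    S mu -> S nu -> 0 <= t <= 1 ->
    (forall A : set (borelT X), measurable A ->
       lam A = (t%:E * mu A + (1 - t)%:E * nu A)%E) ->
    S lam.

Definition pushforward_stable (f : X -> X) (S : set (probability (borelT X) R)) : Prop :=
  forall (mu lam : probability (borelT X) R),
    S mu ->
    (forall A : set (borelT X), measurable A -> lam A = mu (f @^-1` A)) ->
    S lam.

End Defs.

From HB Require Import structures.
From mathcomp Require Import all_boot all_order all_algebra.
From mathcomp Require Import all_classical all_reals all_analysis.
From mathcomp Require Import measurable_realfun borel_hierarchy.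
Import Order.TTheory GRing.Theory Num.Theory.
Import numFieldNormedType.Exports.
Local Open Scope classical_set_scope.
Local Open Scope ring_scope.

(* Inner distality of mu says that mu vanishes on each of the open sets
   Int P(x).  This condition is affine in mu, hence convex, and it passes to
   f_* mu because f^-1 (Int P(x)) is an open subset of P(g x) = f^-1 P(x), so
   of Int P(g x).  For closedness, write an open set U of the metric space X as
   a countable union of closed sets F; by Urysohn some continuous phi satisfies
   1_F <= phi <= 1_U, so mu F <= \int phi dmu, while \int phi dnu <= nu U = 0
   for the approximating measures nu. *)

Lemma preimage_interior_subset (T U : topologicalType) (f : T -> U) (A : set U) :
  continuous f -> f @^-1` A° `<=` (f @^-1` A)°.
Proof.
move=> fc; rewrite -open_subsetE; last exact: open_comp (open_interior A).
by move=> y /interior_subset.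
Qed.

Section proximal_cell_shift.
Context {R : realType} {X : pmetricType R} {f g : X -> X}.
Hypotheses (fK : cancel f g) (gK : cancel g f).

Lemma iterz_comp_f (n : int) (y : X) : iterz f g n (f y) = iterz f g (n + 1) y.
Proof.
case: n => [k|[|k]].
- have -> : Posz k + 1 = Posz k.+1 by rewrite -addn1 PoszD.
  exact/esym/iterSr.
- by rewrite /= fK.
- have -> : Negz k.+1 + 1 = Negz k by rewrite !NegzE -addn1 PoszD opprD addrNK.
  by rewrite /= -iterS iterSr fK.
Qed.

Lemma preimage_proximal_cell (x : X) :
  f @^-1` proximal_cell f g x = proximal_cell f g (g x).
Proof.
apply/funext => y; rewrite /preimage /proximal_cell /=; congr (inf _ = 0).
rewrite -{1}(gK x); apply/seteqP; split => _ [n _ <-].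
  by exists (n + 1) => //; rewrite !iterz_comp_f.
by exists (n - 1) => //; rewrite !iterz_comp_f subrK.
Qed.

End proximal_cell_shift.

Lemma borel_open_measurable {T : ptopologicalType} {U : set T} :
  open U -> measurable (U : set (borelT T)).
Proof. exact: sub_sigma_algebra. Qed.

Lemma borel_closed_measurable {T : ptopologicalType} {F : set T} :
  closed F -> measurable (F : set (borelT T)).
Proof.
move=> cF; rewrite -[F]setCK; apply: measurableC.
by apply: borel_open_measurable; exact: closed_openC.
Qed.

Lemma borel_continuous_measurable {R : realType} {T : ptopologicalType}
    {phi : T -> R} :
  continuous phi -> measurable_fun [set: borelT T] phi.
Proof.
move=> phic; apply: (measurability _ (RGenOInfty.measurableE R)) => //.
move=> _ [_ [r ->] <-]; rewrite setTI; apply: borel_open_measurable.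
by apply: open_comp; [move=> ? _; exact: phic | exact: interval_open].
Qed.

Section M_idis_invariance.
Context {R : realType} (X : pmetricType R) (f g : X -> X).

Lemma measure_convex_M_idis : measure_convex (M_idis f g).
Proof.
move=> mu nu lam t mu0 nu0 _ lamE x.
rewrite lamE; last by apply: borel_open_measurable; exact: open_interior.
by rewrite mu0 nu0 !mule0 adde0.
Qed.

Lemma pushforward_stable_M_idis :
  continuous f -> cancel f g -> cancel g f -> pushforward_stable f (M_idis f g).
Proof.
move=> fc fK gK mu lam mu0 lamE x.
rewrite lamE; last by apply: borel_open_measurable; exact: open_interior.
apply/eqP; rewrite -measure_le0 -(mu0 (g x)).
apply: le_measure; rewrite ?inE.
- by apply: borel_open_measurable; exact: open_comp (open_interior _).
- by apply: borel_open_measurable; exact: open_interior.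
- rewrite -(preimage_proximal_cell fK gK); exact: preimage_interior_subset.
Qed.

End M_idis_invariance.

Section integral_indic_bounds.
Local Open Scope ereal_scope.
Context {d} {T : measurableType d} {R : realType}.
Context (mu : {measure set T -> \bar R}) {phi : T -> R}.
Hypothesis mphi : measurable_fun [set: T] phi.

Lemma measure_le_integral {F : set T} :
  measurable F -> (forall x, \1_F x <= phi x)%R ->
  mu F <= \int[mu]_x (phi x)%:E.
Proof.
move=> mF Fphi; rewrite -(setIT F) -integral_indic //.
apply: ge0_le_integral => //.
- exact/measurable_EFinP/measurable_indic.
- exact/measurable_EFinP.
- by move=> x _; rewrite lee_fin.
Qed.

Lemma integral_le_measure {U : set T} :
  measurable U -> (forall x, 0 <= phi x <= \1_U x)%R ->
  \int[mu]_x (phi x)%:E <= mu U.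
Proof.
move=> mU Uphi; rewrite -(setIT U) -integral_indic //.
apply: ge0_le_integral => //.
- by move=> x _; rewrite lee_fin; case/andP: (Uphi x).
- exact/measurable_EFinP.
- exact/measurable_EFinP/measurable_indic.
- by move=> x _; rewrite lee_fin; case/andP: (Uphi x).
Qed.

End integral_indic_bounds.

Lemma urysohn_indic {R : realType} {T : pseudoMetricType R} {F U : set T} :
  closed F -> open U -> F `<=` U ->
  exists phi : T -> R,
    [/\ continuous phi, forall x, \1_F x <= phi x & forall x, 0 <= phi x <= \1_U x].
Proof.
move=> cF oU FU; have sep : uniform_separator (~` U) F.
  apply: (normal_separatorP.1 pseudometric_normal) => //; first exact: open_closedC.
  by rewrite setIC; apply/disjoints_subset; rewrite setCK.
pose phi : T -> R := Urysohn (~` U) F.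
have phi01 x : 0 <= phi x <= 1 by have /= := Urysohn_range (imageT phi x); rewrite in_itv.
exists phi; split => [|x|x]; first exact: Urysohn_continuous.
- have [Fx|nFx] := pselect (F x); last by rewrite indicE memNset //; case/andP: (phi01 x).
  by rewrite indicE mem_set // /phi (Urysohn_sub1 sep (imageP _ Fx)).
- have [Ux|nUx] := pselect (U x); first by rewrite indicE mem_set.
  by rewrite indicE memNset // /phi (Urysohn_sub0 sep (imageP _ (nUx : (~` U) x))) lexx.
Qed.

Section metric_Fsigma.
Context {R : realType} {T : metricType R}.

Lemma closed_mdist_ge (A : set T) (r : R) :
  closed [set w | forall a, A a -> r <= mdist w a].
Proof.
rewrite -[X in closed X]setCK; apply: open_closedC; rewrite openE => w /=.
move=> /existsNP[a /not_implyP[Aa /negP]]; rewrite -ltNge => war.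
apply/nbhs_ballP; exists (r - mdist w a) => /=; first by rewrite subr_gt0.
move=> z; rewrite ballEmdist /= ltrBrDr => wz /(_ a Aa); apply/negP; rewrite -ltNge.
by apply: le_lt_trans (metric_triangle z w a) _; rewrite metric_sym.
Qed.

Lemma open_Fsigma {U : set T} : open U -> Fsigma U.
Proof.
move=> oU; exists (fun k => [set w | forall a, ~ U a -> k.+1%:R^-1 <= mdist w a]).
  by move=> k; exact: closed_mdist_ge.
apply/seteqP; split => [w Uw|w [k _ Fw]]; last first.
  by apply: contrapT => nUw; have := Fw w nUw; rewrite mdistxx leNgt invr_gt0 ltr0n.
have /nbhs_ballP[e /= e0 wU] : nbhs w U by exact: open_nbhs_nbhs.
have [k] := ltr_add_invr e0; rewrite add0r => ke.
exists k => // a; apply: contra_notP => /negP; rewrite -ltNge => wa.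
by apply: wU; rewrite ballEmdist /=; exact: lt_trans ke.
Qed.

End metric_Fsigma.

Section null_under_weak_star_approximation.
Context {R : realType} {X : pmetricType R}.
Variables (mu : probability (borelT X) R) (U : set X).
Hypothesis oU : open U.
Hypothesis mu_approx : forall phi : X -> R, continuous phi -> forall e : R, 0 < e ->
  exists2 nu : probability (borelT X) R, nu U = 0%E & `|pint nu phi - pint mu phi| < e.

Let mU : measurable (U : set (borelT X)).
Proof. exact: borel_open_measurable. Qed.

Lemma closed_null_of_approx (F : set X) : closed F -> F `<=` U -> mu F = 0%E.
Proof.
move=> cF FU; have [phi [phic Fphi Uphi]] := urysohn_indic cF oU FU.
have mphi := borel_continuous_measurable phic.
have phi0 (P : probability (borelT X) R) : (0 <= \int[P]_x (phi x)%:E)%E.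
  by apply: integral_ge0 => x _; rewrite lee_fin; case/andP: (Uphi x).
have int_fin : (\int[mu]_x (phi x)%:E)%E \is a fin_num.
  rewrite ge0_fin_numE //; apply: le_lt_trans (integral_le_measure mu mphi mU Uphi) _.
  exact: le_lt_trans (probability_le1 _ mU) (ltry _).
have pint_le0 : pint mu phi <= 0.
  apply/ler_addgt0Pr => e /(mu_approx _ phic)[nu nuU]; rewrite add0r.
  have -> : pint nu phi = 0.
    rewrite /pint (_ : (\int[nu]_x (phi x)%:E)%E = 0%E) //.
    apply/eqP; rewrite eq_le phi0 andbT -nuU; exact: integral_le_measure.
  by rewrite sub0r normrN => /ltW; apply: le_trans (ler_norm _).
apply/eqP; rewrite -measure_le0.
apply: le_trans (measure_le_integral mu mphi (borel_closed_measurable cF) Fphi) _.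
by rewrite -(fineK int_fin) lee_fin.
Qed.

Lemma open_null_of_approx : mu U = 0%E.
Proof.
have [F cF UE] := open_Fsigma oU.
apply/(negligibleP mu mU); rewrite UE; apply: negligible_bigcup => k.
have mF : measurable (F k : set (borelT X)) := borel_closed_measurable (cF k).
apply/(negligibleP mu mF)/closed_null_of_approx => //.
by rewrite UE; exact: bigcup_sup.
Qed.

End null_under_weak_star_approximation.

Lemma weak_star_closed_M_idis {R : realType} {X : pmetricType R} (f g : X -> X) :
  weak_star_closed (M_idis f g).
Proof.
move=> mu mu_adh x; apply: open_null_of_approx; first exact: open_interior.
move=> phi phic e e0; have [nu [nuS nu_close]] := mu_adh 1%N (fun=> phi) e (fun=> phic) e0.
by exists nu; [exact: nuS | exact: nu_close ord0].
Qed.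

Theorem lemma3p1 (R : realType) (X : pmetricType R) (f g : X -> X)
  (hX : compact [set: X])
  (hf : continuous f) (hg : continuous g)
  (hfg : cancel f g) (hgf : cancel g f) :
  [/\ weak_star_closed (M_idis f g),
      measure_convex (M_idis f g)
    & pushforward_stable f (M_idis f g)].
Proof.
split; first exact: weak_star_closed_M_idis.
- exact: measure_convex_M_idis.
- exact: pushforward_stable_M_idis.
Qed.
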